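(* Let $n,d\ge1$, $p>d$, $\Delta\in\mathbb{R}^{nd\times nd}$ symmetric with $d\times d$ blocks, $\Delta_{ii}=0$, $Z^{\top}=[I_d,\dots,I_d]$, $A=ZZ^{\top}+\Delta$, $f(S)=\langle A,SS^{\top}\rangle$. Every first-order critical point $S$ of $f$ satisfies \[ \|SS^{\top}\|_F^2\ge\|Z^{\top}S\|_F^2-\frac1n\|\Delta S\|_F^2. \]
   Context: $S\in\mathbb{R}^{nd\times p}$ has $d\times p$ blocks $S_i$ with $S_iS_i^{\top}=I_d$; $A_{ij}=I_d+\Delta_{ij}$. $S$ is a first-order critical point if $\sum_jA_{ij}S_j=\Lambda_{ii}S_i$ for all $i$, where $\Lambda_{ii}=\frac12\sum_j(S_iS_j^{\top}A_{ji}+A_{ij}S_jS_i^{\top})$ (equivalently, the Riemannian gradient of $f$ on the product of Stiefel manifolds vanishes). *)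

From HB Require Import structures.
From mathcomp Require Import all_boot all_order all_algebra.
Set Implicit Arguments. Unset Strict Implicit. Unset Printing Implicit Defensive.
Import Order.TTheory GRing.Theory Num.Theory.
Local Open Scope ring_scope.

(* An nd x p matrix S is represented by its n blocks S i : 'M_(d,p);
   an nd x nd matrix Delta by its d x d blocks Delta i j. *)

Definition frob2 (R : ringType) (m k : nat) (M : 'M[R]_(m, k)) : R :=
  \sum_(a < m) \sum_(b < k) M a b ^+ 2.

(* block (i,j) of A = Z Z^T + Delta, i.e. I_d + Delta_ij *)
Definition Ablk (R : ringType) (n d : nat) (Delta : 'I_n -> 'I_n -> 'M[R]_d)
  (i j : 'I_n) : 'M[R]_d := 1%:M + Delta i j.

Definition Lambda (R : fieldType) (n d p : nat) (Delta : 'I_n -> 'I_n -> 'M[R]_d)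
  (S : 'I_n -> 'M[R]_(d, p)) (i : 'I_n) : 'M[R]_d :=
  2%:R^-1 *: \sum_(j < n) (S i *m (S j)^T *m Ablk Delta j i
                           + Ablk Delta i j *m S j *m (S i)^T).

Definition stiefel_prod (R : ringType) (n d p : nat) (S : 'I_n -> 'M[R]_(d, p)) :=
  forall i, S i *m (S i)^T = 1%:M.

(* first-order critical point of f(S) = <A, S S^T> *)
Definition first_order_critical (R : fieldType) (n d p : nat)
  (Delta : 'I_n -> 'I_n -> 'M[R]_d) (S : 'I_n -> 'M[R]_(d, p)) :=
  stiefel_prod S /\
  forall i, \sum_(j < n) Ablk Delta i j *m S j = Lambda Delta S i *m S i.

(* At a critical point, Z^T S + (Delta S)_i = Lambda_ii S_i lies in the row space of S_i for
   every i. Since S_i is a co-isometry, the projection onto the orthogonal complement of that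
   row space kills it, so Pythagoras gives
   |Z^T S|^2 <= |Z^T S S_i^T|^2 + |(Delta S)_i|^2. Summing over i and bounding
   |Z^T S S_i^T|^2 = |sum_j S_j S_i^T|^2 by Cauchy-Schwarz yields
   n |Z^T S|^2 <= n |S S^T|^2 + |Delta S|^2. *)

From HB Require Import structures.
From mathcomp Require Import all_boot all_order all_algebra.

Set Implicit Arguments.
Unset Strict Implicit.
Unset Printing Implicit Defensive.

Import Order.TTheory GRing.Theory Num.Theory.
Local Open Scope ring_scope.

Section FrobeniusRing.
Variable R : comNzRingType.

Lemma frob2E m k (M : 'M[R]_(m, k)) : frob2 M = \tr (M *m M^T).
Proof.
rewrite /frob2 /mxtrace; apply: eq_bigr => a _; rewrite mxE.
by apply: eq_bigr => b _; rewrite mxE expr2.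
Qed.

Lemma frob2N m k (M : 'M[R]_(m, k)) : frob2 (- M) = frob2 M.
Proof. by apply: eq_bigr => a _; apply: eq_bigr => b _; rewrite mxE sqrrN. Qed.

Lemma frob2_proj m k (X : 'M[R]_(m, k)) (P : 'M[R]_k) :
  P^T = P -> P *m P = P ->
  frob2 X = frob2 (X *m P) + frob2 (X *m (1%:M - P)).
Proof.
move=> symP idemP.
have symQ : (1%:M - P)^T = 1%:M - P by rewrite linearB /= trmx1 symP.
have idemQ : (1%:M - P) *m (1%:M - P) = 1%:M - P.
  by rewrite mulmxBl mulmxBr !mulmx1 mul1mx mulmxBr mulmx1 idemP subrr subr0.
rewrite !frob2E !trmx_mul symP symQ !mulmxA -(mulmxA X P P) idemP.
rewrite -(mulmxA X (1%:M - P)) idemQ -mxtraceD -mulmxDl -mulmxDr.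
by rewrite addrC subrK mulmx1.
Qed.

Section CoIsometry.
Variables (d p : nat) (S : 'M[R]_(d, p)).
Hypothesis coisoS : S *m S^T = 1%:M.

Let P := S^T *m S.

Lemma coisometry_proj_idem : P *m P = P.
Proof. by rewrite /P mulmxA -(mulmxA _ S) coisoS mulmx1. Qed.

Lemma frob2_mul_coisometry_proj m (X : 'M[R]_(m, p)) :
  frob2 (X *m P) = frob2 (X *m S^T).
Proof. by rewrite !frob2E !trmx_mul /P !mulmxA -(mulmxA _ S) coisoS mulmx1. Qed.

Lemma row_space_mul_coisometry_projC m (L : 'M[R]_(m, d)) :
  L *m S *m (1%:M - P) = 0.
Proof. by rewrite mulmxBr mulmx1 /P mulmxA -(mulmxA L) coisoS mulmx1 subrr. Qed.

End CoIsometry.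
End FrobeniusRing.

Section FrobeniusReal.
Variable R : realDomainType.

Lemma frob2_ge0 m k (M : 'M[R]_(m, k)) : 0 <= frob2 M.
Proof. by apply: sumr_ge0 => a _; apply: sumr_ge0 => b _; apply: sqr_ge0. Qed.

Lemma sqr_sum_le n (x : 'I_n -> R) :
  (\sum_i x i) ^+ 2 <= n%:R * \sum_i x i ^+ 2.
Proof.
have sqr_sumE : (\sum_i x i) ^+ 2 = \sum_i \sum_j x i * x j.
  by rewrite expr2 mulr_suml; under eq_bigr do rewrite mulr_sumr.
have sum_sqrE : \sum_i \sum_j (x i ^+ 2 + x j ^+ 2) = (n%:R * \sum_i x i ^+ 2) *+ 2.
  under eq_bigr do rewrite big_split /= sumr_const card_ord.
  by rewrite big_split /= sumr_const card_ord sumrMnl -mulr2n mulr_natl.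
rewrite sqr_sumE -(ler_pMn2r (isT : 0 < 2)%N) -sum_sqrE -sumrMnl.
apply: ler_sum => i _; rewrite -sumrMnl; apply: ler_sum => j _.
exact: leif_mean_square_scaled.
Qed.

Lemma frob2_sum_le n m k (X : 'I_n -> 'M[R]_(m, k)) :
  frob2 (\sum_i X i) <= n%:R * \sum_i frob2 (X i).
Proof.
rewrite /frob2 [X in _ <= _ * X]exchange_big /= mulr_sumr; apply: ler_sum => a _.
rewrite [X in _ <= _ * X]exchange_big /= mulr_sumr; apply: ler_sum => b _.
by rewrite summxE; apply: sqr_sum_le.
Qed.

Lemma frob2_le_coisometry_row_space m d p (S : 'M[R]_(d, p)) (L : 'M[R]_(m, d))
    (X Y : 'M[R]_(m, p)) :
  S *m S^T = 1%:M -> X + Y = L *m S ->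
  frob2 X <= frob2 (X *m S^T) + frob2 Y.
Proof.
move=> coisoS XY_row.
have symP : (S^T *m S)^T = S^T *m S by rewrite trmx_mul trmxK.
have idemP := coisometry_proj_idem coisoS.
have XprojC : X *m (1%:M - S^T *m S) = - (Y *m (1%:M - S^T *m S)).
  apply/eqP; rewrite -addr_eq0 -mulmxDl XY_row.
  by rewrite (row_space_mul_coisometry_projC coisoS).
rewrite (frob2_proj X symP idemP) XprojC frob2N.
rewrite (frob2_mul_coisometry_proj coisoS) lerD2l.
by rewrite [leRHS](frob2_proj Y symP idemP) lerDr frob2_ge0.
Qed.

End FrobeniusReal.

Lemma first_order_critical_row_space (R : fieldType) n d p
    (Delta : 'I_n -> 'I_n -> 'M[R]_d) (S : 'I_n -> 'M[R]_(d, p)) i :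
  first_order_critical Delta S ->
  \sum_j S j + \sum_j Delta i j *m S j = Lambda Delta S i *m S i.
Proof.
case=> _ /(_ i) <-; rewrite -big_split; apply: eq_bigr => j _.
by rewrite /Ablk mulmxDl mul1mx.
Qed.

Theorem lemma7 (R : realFieldType) (n d p : nat)
  (Delta : 'I_n -> 'I_n -> 'M[R]_d) (S : 'I_n -> 'M[R]_(d, p)) :
  (1 <= n)%N -> (1 <= d)%N -> (d < p)%N ->
  (forall i j, Delta j i = (Delta i j)^T) ->
  (forall i, Delta i i = 0) ->
  first_order_critical Delta S ->
  \sum_(i < n) \sum_(j < n) frob2 (S i *m (S j)^T)
    >= frob2 (\sum_(i < n) S i)
       - n%:R^-1 * \sum_(i < n) frob2 (\sum_(j < n) Delta i j *m S j).
Proof.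
move=> n_gt0 _ _ _ _ crit.
set T := \sum_i S i.
set SSt := \sum_i \sum_j frob2 (S i *m (S j)^T).
set E := \sum_i frob2 (\sum_j Delta i j *m S j).
have block_le i : frob2 T <= frob2 (T *m (S i)^T) + frob2 (\sum_j Delta i j *m S j).
  exact: frob2_le_coisometry_row_space (crit.1 i) (first_order_critical_row_space i crit).
have sum_block_le : \sum_i frob2 (T *m (S i)^T) <= n%:R * SSt.
  rewrite [SSt]exchange_big mulr_sumr; apply: ler_sum => i _.
  by rewrite /T mulmx_suml frob2_sum_le.
have sum_le : n%:R * frob2 T <= \sum_i frob2 (T *m (S i)^T) + E.
  rewrite mulr_natl -[n in _ *+ n]card_ord -sumr_const -big_split /=.
  by apply: ler_sum => i _; apply: block_le.
have n_pos : 0 < n%:R :> R by rewrite ltr0n.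
rewrite lerBlDr -(ler_pM2l n_pos) mulrDr mulrA mulfV ?gt_eqF // mul1r.
by apply: le_trans sum_le _; rewrite lerD2r.
Qed.
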